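(* Let $q\equiv 3\pmod 4$ be a prime power with $q\geq 7$, let $n\geq 3$ be an integer and let $q'$ be a prime power. The parameter triples $$\Big(q,\tfrac{q-1}{2},\tfrac{q-3}{4}\Big)\quad\text{and}\quad\Big(\tfrac{q'^n-1}{q'-1},\tfrac{q'^{n-1}-1}{q'-1},\tfrac{q'^{n-2}-1}{q'-1}\Big)$$ (of the bi-Paley graph $BP(q)$ and of the incidence graph $I_n(q')$, respectively) coincide only when $q'=2$ and $q=2^n-1$ is a prime.
   Context: These triples are the design parameters (half-size, degree, number of common neighbours of two distinct same-colour vertices) of the bi-Paley graph $BP(q)$ and of the incidence graph $I_n(q')$ of $1$-dimensional versus $(n-1)$-dimensional subspaces of an $n$-dimensional vector space over the field with $q'$ elements. *)

From mathcomp Require Import all_boot.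
Set Implicit Arguments. Unset Strict Implicit. Unset Printing Implicit Defensive.

Definition prime_power (q : nat) : Prop :=
  exists p k : nat, prime p /\ 0 < k /\ q = p ^ k.

(* Parameters (half-size, degree, common neighbours) of the bi-Paley graph BP(q). *)
Definition bp_params (q : nat) : nat * nat * nat :=
  (q, (q - 1) %/ 2, (q - 3) %/ 4).

(* Parameters of the incidence graph I_n(q') of points vs hyperplanes of F_q'^n. *)
Definition inc_params (n q' : nat) : nat * nat * nat :=
  ((q' ^ n - 1) %/ (q' - 1), (q' ^ n.-1 - 1) %/ (q' - 1),
   (q' ^ (n - 2) - 1) %/ (q' - 1)).

(* Writing [m]_Q for (Q^m - 1)/(Q - 1) = 1 + Q + ... + Q^(m-1), the equations q = [n]_q' and
   (q - 1)/2 = [n-1]_q' together with [n]_q' = 1 + q' [n-1]_q' force q' = 2, so q = 2^n - 1.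
   Since q = p^k is 3 mod 4, p and k are odd; then p^k + 1 = (p + 1) u with u an odd divisor
   of 2^n, so u = 1 and k = 1. *)
From mathcomp Require Import all_boot.
From mathcomp Require Import zify.

Set Implicit Arguments.
Unset Strict Implicit.
Unset Printing Implicit Defensive.

Lemma divn_subn1_expn Q k :
  1 < Q -> (Q ^ k - 1) %/ (Q - 1) = \sum_(i < k) Q ^ i.
Proof. by move=> Q_gt1; rewrite !subn1 predn_exp mulKn // -subn1 subn_gt0. Qed.

Lemma geom_sumS Q k : \sum_(i < k.+1) Q ^ i = 1 + Q * \sum_(i < k) Q ^ i.
Proof.
by rewrite big_ord_recl expn0 big_distrr; congr (_ + _); apply: eq_bigr => i _; rewrite expnS.
Qed.

Lemma sqrn_odd_mod4 x : odd x -> x ^ 2 = 1 %[mod 4].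
Proof. by move=> x_odd; rewrite -(odd_double_half x) x_odd -mul2n; lia. Qed.

Lemma expn_odd_double_mod4 x k : odd x -> x ^ k.*2 = 1 %[mod 4].
Proof.
by move=> x_odd; rewrite -mul2n expnM -modnXm (sqrn_odd_mod4 x_odd) modnXm exp1n.
Qed.

Lemma expn_odd_addn1_factor x k :
  odd x -> odd k -> exists2 u, x ^ k + 1 = (x + 1) * u & odd u.
Proof.
move=> x_odd k_odd; rewrite -[k](odd_double_half k) k_odd add1n.
elim: k./2 => [|j [u Eu u_odd]].
  by exists 1; rewrite ?muln1.
have u_gt0 := odd_gt0 u_odd; have x_gt0 := odd_gt0 x_odd.
have x_le : x <= x * x * u by nia.
(* x^(k+2) + 1 = x^2 (x^k + 1) - (x^2 - 1) = (x + 1) (x^2 u - (x - 1)) *)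
exists (x * x * u + 1 - x).
  rewrite doubleS !expnS mulnA; move: Eu; rewrite expnS; move: (x * _) => z Eu.
  by have := congr1 (muln (x * x)) Eu; nia.
by rewrite addnC -addnBA // oddD oddB // !oddM x_odd u_odd.
Qed.

Lemma expn_odd_addn1_pow2 x k n :
  1 < x -> odd x -> odd k -> x ^ k + 1 = 2 ^ n -> k = 1.
Proof.
move=> x_gt1 x_odd k_odd Exk; have [u Eu u_odd] := expn_odd_addn1_factor x_odd k_odd.
have [m _ Eum] : exists2 m, m <= n & u = 2 ^ m.
  by apply/(dvdn_pfactor _ _ (isT : prime 2)); rewrite -Exk Eu dvdn_mull.
have u1 : u = 1 by case: m Eum => [|m] Eum; rewrite Eum // oddX in u_odd.
have : x ^ k = x ^ 1 by move: Eu; rewrite u1 muln1 expn1 => /addIn.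
by move/eqP; rewrite eqn_exp2l // => /eqP.
Qed.

Lemma Mersenne_prime_power_prime p k n :
  prime p -> 0 < k -> p ^ k %% 4 = 3 -> p ^ k = 2 ^ n - 1 -> prime (p ^ k).
Proof.
move=> p_pr k_gt0 pk_mod4 pk_eq.
have pk_odd : odd (p ^ k) by rewrite -(odd_mod _ (erefl : odd 4 = false)) pk_mod4.
have p_odd : odd p by move: pk_odd; rewrite oddX eqn0Ngt k_gt0.
have k_odd : odd k.
  apply/negPn/negP => k_even; move: pk_mod4.
  by rewrite -[k](odd_double_half k) (negbTE k_even) expn_odd_double_mod4.
have pk_succ : p ^ k + 1 = 2 ^ n by rewrite pk_eq subnK // expn_gt0.
by rewrite (expn_odd_addn1_pow2 (prime_gt1 p_pr) p_odd k_odd pk_succ) expn1.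
Qed.

Theorem mainTheorem9 (q n q' : nat) :
  prime_power q -> q %% 4 = 3 -> 7 <= q -> 3 <= n -> prime_power q' ->
  bp_params q = inc_params n q' ->
  q' = 2 /\ q = 2 ^ n - 1 /\ prime q.
Proof.
move=> [p [k [p_pr [k_gt0 ->]]]] q_mod4 _ n_ge3 [r [l [r_pr [l_gt0 q'_eq]]]].
rewrite /bp_params /inc_params => -[Eq Ehalf _].
have q'_gt1 : 1 < q' by rewrite q'_eq -[X in X < _](exp1n l) ltn_exp2r // prime_gt1.
case: n n_ge3 Eq Ehalf => // m m_ge2; rewrite !divn_subn1_expn // geom_sumS /=.
set s := \sum_(i < m) q' ^ i => Eq Ehalf.
have s_gt0 : 0 < s by rewrite /s -(prednK (ltnW m_ge2)) geom_sumS.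
have q'2 : q' = 2.
  by apply/eqP; rewrite -(eqn_pmul2r s_gt0) mulnC; apply/eqP; lia.
have Eq2 : p ^ k = 2 ^ m.+1 - 1.
  by rewrite Eq /s -geom_sumS -divn_subn1_expn // q'2 divn1.
by split; last split; last exact: Mersenne_prime_power_prime Eq2.
Qed.
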